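(* Under Assumption A, for $\lambda>0$ let \[ \Phi(x,\lambda)=\int_0^x\sqrt{\Big(\frac{\lambda-q(y)}{p(y)}\Big)_+}\,dy,\qquad K(\lambda)=\exp\Big(-\int_0^\infty\sqrt{\Big(\frac{q(y)-\lambda}{p(y)}\Big)_+}\,dy\Big). \] Then the modified Jost solution satisfies \[ \theta(x,\lambda\pm i0)=K(\lambda)\,e^{\pm i\Phi(x,\lambda)}\big(1+O(\varepsilon(x))\big),\qquad x\to\infty . \]
   Context: Assumption A: $p>0$ absolutely continuous on $\mathbb R_+$, $p'\in L^1(\mathbb R_+)$, $p(x)\to p_0>0$; $q$ real, $q\in L^1(0,x_0)$, absolutely continuous on $[x_0,\infty)$, $q'\in L^1(x_0,\infty)$, $q(x)\to0$ as $x\to\infty$. $(A)_+=(|A|+A)/2$. $\varepsilon(x)=\int_x^\infty(|p'|+|q'|)dy$. Modified Jost solution: for $z\in\mathbb C\setminus\mathbb R$ or $z=\lambda\pm i0$ ($\lambda\ne0$), put $\omega(x,z)=\sqrt{(q(x)-z)/p(x)}$ ($\Re\omega>0$, boundary values on the cut), $a(x,z)=\exp(-\int_0^x\omega(y,z)dy)$; $\theta(x,z)$ is the unique solution of $-(p\theta')'+q\theta=z\theta$ on $\mathbb R_+$ with $\theta(x,z)=a(x,z)(1+O(\varepsilon(x)))$ as $x\to\infty$, obtained as $\theta=au$ where $u$ is the bounded solution of $u(x)=1+\int_x^\infty G(x,y,z)(p\omega)'(y)u(y)dy$, $G(x,y,z)=a(y,z)^2\int_x^yp(s)^{-1}a(s,z)^{-2}ds$.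 *)

From HB Require Import structures.
From mathcomp Require Import all_boot all_order all_algebra.
From mathcomp Require Import all_classical all_reals all_analysis.
From mathcomp Require Import complex.
Set Implicit Arguments. Unset Strict Implicit. Unset Printing Implicit Defensive.
Import Order.TTheory GRing.Theory Num.Theory.
Import numFieldNormedType.Exports.
Local Open Scope classical_set_scope.
Local Open Scope ring_scope.
Local Open Scope complex_scope.

Section Defs.
Context {R : realType}.
Local Notation mu := (@lebesgue_measure R).

Definition posp (A : R) : R := (`|A| + A) / 2.

Definition cnorm (z : R[i]) : R := Num.sqrt (complex.Re z ^+ 2 + complex.Im z ^+ 2).

Definition cexp (z : R[i]) : R[i] :=
  (expR (complex.Re z))%:C * (cos (complex.Im z) +i* sin (complex.Im z)).

Definition integrable_on (D : set R) (f : R -> R) : Prop :=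
  mu.-integrable D (EFin \o f).

Definition is_omega (p q : R -> R) (x : R) (z c : R[i]) : Prop :=
  c * c = ((q x)%:C - z) / (p x)%:C /\ 0 < complex.Re c.

(* c = omega(x, lam + s i0): the boundary value (limit as eta -> 0+) of
   omega(x, lam + s i eta); s = 1 for lam + i0, s = -1 for lam - i0 *)
Definition is_omega_bv (p q : R -> R) (lam s x : R) (c : R[i]) : Prop :=
  forall e : R, 0 < e -> exists2 d : R, 0 < d &
    forall eta : R, 0 < eta -> eta < d ->
      forall c' : R[i], is_omega p q x (lam +i* (s * eta)) c' ->
        cnorm (c' - c) < e.

(* a(x,z) = exp(- int_0^x omega(y,z) dy), given om(y) = omega(y,z) *)
Definition jost_a (om : R -> R[i]) (x : R) : R[i] :=
  cexp (- ((\int[mu]_(y in `[0, x]) complex.Re (om y)) +i*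
           (\int[mu]_(y in `[0, x]) complex.Im (om y)))).

Definition eps_fun (dp dq : R -> R) (x : R) : R :=
  \int[mu]_(y in `[x, +oo[) (`|dp y| + `|dq y|).

Definition bigO_eps (r : R -> R[i]) (eps : R -> R) : Prop :=
  exists C X : R, forall x, X <= x -> cnorm (r x) <= C * eps x.

(* f : R -> R solves -(p f')' + q f = lam f on R_+ in the standard
   (Caratheodory / quasi-derivative) sense: f and u = p f' are absolutely
   continuous on every [0,x], f' = u / p and u' = (q - lam) f a.e. *)
Definition sl_solution (p q : R -> R) (lam : R) (f : R -> R) : Prop :=
  exists u : R -> R, forall x, 0 <= x ->
    [/\ integrable_on `[0, x] (fun y => u y / p y),
        integrable_on `[0, x] (fun y => (q y - lam) * f y),
        f x = f 0 + \int[mu]_(y in `[0, x]) (u y / p y) &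
        u x = u 0 + \int[mu]_(y in `[0, x]) ((q y - lam) * f y)].

Definition csl_solution (p q : R -> R) (lam : R) (th : R -> R[i]) : Prop :=
  sl_solution p q lam (fun x => complex.Re (th x)) /\
  sl_solution p q lam (fun x => complex.Im (th x)).

Definition assumptionA (p q dp dq : R -> R) (p0 x0 : R) : Prop :=
  [/\ (forall x, 0 <= x -> 0 < p x),
      integrable_on `[0, +oo[ dp &
      (forall x, 0 <= x -> p x = p 0 + \int[mu]_(y in `[0, x]) dp y)] /\
  (0 < p0 /\ p x @[x --> +oo] --> p0) /\
  [/\ 0 <= x0, integrable_on `[0, x0] q,
      integrable_on `[x0, +oo[ dq,
      (forall x, x0 <= x -> q x = q x0 + \int[mu]_(y in `[x0, x]) dq y) &
      q x @[x --> +oo] --> 0].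

Definition Phi (p q : R -> R) (lam x : R) : R :=
  \int[mu]_(y in `[0, x]) Num.sqrt (posp ((lam - q y) / p y)).

Definition Kfun (p q : R -> R) (lam : R) : R :=
  expR (- \int[mu]_(y in `[0, +oo[) Num.sqrt (posp ((q y - lam) / p y))).

Definition modified_jost (p q dp dq : R -> R) (lam s : R)
    (om : R -> R[i]) (th : R -> R[i]) : Prop :=
  csl_solution p q lam th /\
  exists r : R -> R[i],
    (forall x, 0 <= x -> th x = jost_a om x * (1 + r x)) /\
    bigO_eps r (eps_fun dp dq).

End Defs.

(* On the cut, omega(y, lam + s i0) = u + iv is the limit of roots of
   (q - lam - i s eta)/p as eta -> 0+.  The limit squares to the real number
   (q - lam)/p, has u >= 0, and s v <= 0 because 2uv = -s eta/p along the way;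
   hence u = sqrt(((q - lam)/p)_+) and v = -s sqrt(((lam - q)/p)_+).  So
   int_0^x omega = int_0^x u - i s Phi(x), and since q -> 0 < lam the function
   u vanishes for large y, so that int_0^x u = -ln K(lam) for large x.  Thus
   a(x, lam + s i0) = K(lam) e^{i s Phi(x, lam)} for all large x, and the
   O(eps) remainder of theta carries over unchanged. *)

From HB Require Import structures.
From mathcomp Require Import all_boot all_order all_algebra.
From mathcomp Require Import all_classical all_reals all_analysis.
From mathcomp Require Import complex ring lra.
Import Order.TTheory GRing.Theory Num.Theory.
Local Open Scope ring_scope.
Local Open Scope complex_scope.

Section RealFacts.
Context {R : realType}.

Lemma le0_of_le_small_multiples (K y : R) :
  (forall e, 0 < e -> e < 1 -> y <= K * e) -> y <= 0.
Proof.
move=> hK; rewrite leNgt; apply/negP => y_gt0.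
have K1_gt0 : 0 < 2 * (`|K| + 1) by have := normr_ge0 K; lra.
pose e := Num.min (1 / 2) (y / (2 * (`|K| + 1))).
have e_gt0 : 0 < e by rewrite lt_min; apply/andP; split; [lra | exact: divr_gt0].
have e_lt1 : e < 1 by rewrite gt_min; apply/orP; left; lra.
have e_le : e * (2 * (`|K| + 1)) <= y.
  by rewrite -ler_pdivlMr // ge_min lexx orbT.
have := hK e e_gt0 e_lt1; have := ler_norm K; nra.
Qed.

Lemma eq0_of_norm_le_small_multiples (K y : R) :
  (forall e, 0 < e -> e < 1 -> `|y| <= K * e) -> y = 0.
Proof. by move=> hK; apply/eqP; rewrite -normr_le0; exact: le0_of_le_small_multiples hK. Qed.

Lemma posp_eq0 (a : R) : a <= 0 -> posp a = 0.
Proof. by move=> a_le0; rewrite /posp ler0_norm // addNr mul0r. Qed.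

Lemma posp_sqr (a : R) : posp (a ^+ 2) = a ^+ 2.
Proof. by rewrite /posp ger0_norm ?sqr_ge0 //; field. Qed.

Lemma sqrt_parts_posp (s u v a : R) : (s = 1 \/ s = -1) ->
  0 <= u -> s * v <= 0 -> u * u - v * v = a -> u * v = 0 ->
  u = Num.sqrt (posp a) /\ v = - s * Num.sqrt (posp (- a)).
Proof.
move=> hs u_ge0 sv_le0 <- /eqP; rewrite mulf_eq0 => /orP[/eqP-> | /eqP->].
- rewrite mul0r add0r opprK -expr2 posp_sqr sqrtr_sqr posp_eq0 ?sqrtr0 //;
    last by rewrite oppr_le0 sqr_ge0.
  by case: hs => -> in sv_le0 *; rewrite ?mulN1r ?mul1r ?opprK;
    [rewrite ler0_norm ?opprK; lra | rewrite ger0_norm; lra].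
- by rewrite mul0r subr0 -expr2 posp_sqr sqrtr_sqr ger0_norm // posp_eq0
    ?sqrtr0 ?mulr0 // oppr_le0 sqr_ge0.
Qed.

End RealFacts.

Section ComplexFacts.
Context {R : realType}.

Lemma Re_le_cnorm (z : R[i]) : `|complex.Re z| <= cnorm z.
Proof. by rewrite -sqrtr_sqr ler_sqrt ?addr_ge0 ?sqr_ge0 // lerDl sqr_ge0. Qed.

Lemma Im_le_cnorm (z : R[i]) : `|complex.Im z| <= cnorm z.
Proof. by rewrite /cnorm addrC -sqrtr_sqr ler_sqrt ?addr_ge0 ?sqr_ge0 // lerDl sqr_ge0. Qed.

Lemma divc_real (a b r : R) : r != 0 -> (a +i* b) / r%:C = (a / r) +i* (b / r).
Proof.
by move=> r_neq0; rewrite -rmorphV ?unitfE //; apply/eqP; rewrite eq_complex /= !mulr0 subr0 add0r !eqxx.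
Qed.

Lemma sqrc_exists (X Y : R) : Y != 0 ->
  exists c : R[i], c * c = X +i* Y /\ 0 < complex.Re c.
Proof.
move=> Y_neq0.
have Y2_gt0 : 0 < Y ^+ 2 by rewrite exprn_even_gt0.
pose N := Num.sqrt (X ^+ 2 + Y ^+ 2).
have N2 : N ^+ 2 = X ^+ 2 + Y ^+ 2 by rewrite sqr_sqrtr // addr_ge0 // sqr_ge0.
have N_ge0 : 0 <= N by exact: sqrtr_ge0.
have NX_gt0 : 0 < N + X by nra.
pose u := Num.sqrt ((N + X) / 2).
have u_gt0 : 0 < u by rewrite sqrtr_gt0; lra.
have u2 : u ^+ 2 = (N + X) / 2 by rewrite sqr_sqrtr //; lra.
exists (u +i* (Y / (2 * u))); split => //=.
(* [u^2 = (N + X)/2] and [(Y/2u)^2 = (N - X)/2] since [Y^2 = N^2 - X^2]. *)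
apply/eqP; rewrite eq_complex /=; apply/andP; split; apply/eqP; last by field; lra.
have -> : u * u - Y / (2 * u) * (Y / (2 * u)) = u ^+ 2 - Y ^+ 2 / (4 * u ^+ 2).
  by field; lra.
have Y2E : Y ^+ 2 = (N - X) * (N + X) by rewrite -subr_sqr N2; ring.
by rewrite u2 Y2E; field; lra.
Qed.

Lemma cexp_neq0 (z : R[i]) : cexp z != 0.
Proof.
rewrite /cexp; apply: mulf_neq0.
  by rewrite eq_complex /= negb_and gt_eqF ?expR_gt0.
rewrite eq_complex /=; apply/negP => /andP[/eqP c0 /eqP s0].
by have := cos2Dsin2 (complex.Im z); rewrite c0 s0 expr0n addr0 => /eqP; rewrite eq_sym oner_eq0.
Qed.

Lemma cexpE (a b : R) : cexp (a +i* b) = (expR a)%:C * cexp (0 +i* b).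
Proof. by rewrite /cexp /= expR0 mul1r. Qed.

End ComplexFacts.

Section BoundaryValue.
Context {R : realType}.
Context {p q : R -> R} {x : R}.
Hypothesis p_gt0 : 0 < p x.

Lemma is_omegaE {z c : R[i]} : is_omega p q x z c ->
  [/\ 0 < complex.Re c,
      complex.Re c * complex.Re c - complex.Im c * complex.Im c = (q x - complex.Re z) / p x
    & complex.Re c * complex.Im c + complex.Im c * complex.Re c = - complex.Im z / p x].
Proof.
case: c z => u v [a b] [+ u_gt0]; rewrite divc_real ?gt_eqF //= => /eqP.
by rewrite eq_complex /= => /andP[/eqP-> /eqP->]; rewrite sub0r.
Qed.

Lemma is_omega_exists (z : R[i]) : complex.Im z != 0 -> exists c, is_omega p q x z c.
Proof.
move=> Imz_neq0.
have [|c [cc c_gt0]] := @sqrc_exists R ((q x - complex.Re z) / p x) (- complex.Im z / p x).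
  by rewrite mulf_eq0 negb_or oppr_eq0 invr_eq0 Imz_neq0 gt_eqF.
exists c; split => //; rewrite cc; case: z {Imz_neq0 cc} => a b.
by rewrite divc_real ?gt_eqF //= sub0r.
Qed.

Context {lam s : R} {c : R[i]}.
Hypotheses (hs : s = 1 \/ s = -1) (hc : is_omega_bv p q lam s x c).

Lemma is_omega_bv_approx (e : R) : 0 < e -> exists eta u v : R,
  [/\ 0 < eta < e, 0 < u, u * u - v * v = (q x - lam) / p x,
      u * v + v * u = - (s * eta) / p x &
      `|u - complex.Re c| < e /\ `|v - complex.Im c| < e].
Proof.
move=> e_gt0; have [d d_gt0 hd] := hc e e_gt0.
pose eta := Num.min d e / 2.
have min_gt0 : 0 < Num.min d e by rewrite lt_min d_gt0.
have min_le_d : Num.min d e <= d by rewrite ge_min lexx.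
have min_le_e : Num.min d e <= e by rewrite ge_min lexx orbT.
have eta_gt0 : 0 < eta by rewrite divr_gt0.
have eta_lt : eta < d /\ eta < e by rewrite /eta; lra.
have s_neq0 : s != 0 by case: hs => ->; rewrite ?oppr_eq0 oner_eq0.
have [c' hc'] : exists c', is_omega p q x (lam +i* (s * eta)) c'.
  by apply: is_omega_exists; rewrite /= mulf_neq0 // gt_eqF.
have [u_gt0 hRe hIm] := is_omegaE hc'.
have := hd eta eta_gt0 eta_lt.1 c' hc'.
case: c' hc' u_gt0 hRe hIm => u' v' _ /= u'_gt0 hRe hIm.
case: (c) => u v near /=.
exists eta, u', v'; split => //; first by rewrite eta_gt0; exact: eta_lt.2.
by split; apply: le_lt_trans near; [exact: (Re_le_cnorm ((u' - u) +i* (v' - v)))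
  | exact: (Im_le_cnorm ((u' - u) +i* (v' - v)))].
Qed.

Lemma is_omega_bv_parts :
  [/\ 0 <= complex.Re c, s * complex.Im c <= 0,
      complex.Re c * complex.Re c - complex.Im c * complex.Im c = (q x - lam) / p x &
      complex.Re c * complex.Im c = 0].
Proof.
have ip_gt0 : 0 < (p x)^-1 by rewrite invr_gt0.
case: c hc is_omega_bv_approx => u v _ /= approx.
have u_le : u <= `|u| := ler_norm u.
have Nu_le : - u <= `|u| by rewrite -normrN ler_norm.
have v_le : v <= `|v| := ler_norm v.
have Nv_le : - v <= `|v| by rewrite -normrN ler_norm.
split.
- rewrite -oppr_le0; apply: (@le0_of_le_small_multiples _ 1) => e e_gt0 _.
  have [eta [u' [v' [_ u'_gt0 _ _ [+ _]]]]] := approx e e_gt0.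
  rewrite ltr_norml; lra.
- apply: (@le0_of_le_small_multiples _ 1) => e e_gt0 _.
  have [eta [u' [v' [/andP[eta_gt0 _] u'_gt0 _ hIm [_ +]]]]] := approx e e_gt0.
  rewrite ltr_norml => hv.
  have : 0 < eta / p x by rewrite divr_gt0.
  by case: hs hIm => -> hIm; nra.
- apply/eqP; rewrite -subr_eq0; apply/eqP.
  apply: (@eq0_of_norm_le_small_multiples _ (2 * `|u| + 2 * `|v| + 2)) => e e_gt0 e_lt1.
  have [eta [u' [v' [_ _ <- _ [+ +]]]]] := approx e e_gt0.
  rewrite !ltr_norml => hu hv; rewrite ler_norml; apply/andP; split; nra.
- apply: (@eq0_of_norm_le_small_multiples _ (`|u| + `|v| + 1 + (p x)^-1)) => e e_gt0 e_lt1.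
  have [eta [u' [v' [/andP[eta_gt0 eta_lt] _ _ hIm [+ +]]]]] := approx e e_gt0.
  rewrite !ltr_norml => hu hv.
  have eta_le : eta / p x <= e / p x by rewrite ler_pM2r // ltW.
  by rewrite ler_norml; apply/andP; case: hs hIm => -> hIm; split; nra.
Qed.

Lemma is_omega_bvE :
  complex.Re c = Num.sqrt (posp ((q x - lam) / p x)) /\
  complex.Im c = - s * Num.sqrt (posp ((lam - q x) / p x)).
Proof.
have [Re_ge0 sIm_le0 hsq hprod] := is_omega_bv_parts.
have -> : (lam - q x) / p x = - ((q x - lam) / p x) by rewrite -mulNr opprB.
exact: sqrt_parts_posp.
Qed.

End BoundaryValue.

Lemma Rintegral_ge0N {d} {T : measurableType d} {R : realType}
    (mu : {measure set T -> \bar R}) (D : set T) (g : T -> R) :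
  (forall y, D y -> 0 <= g y) ->
  \int[mu]_(y in D) (- g y) = - \int[mu]_(y in D) g y.
Proof.
move=> g_ge0; rewrite /Rintegral -fineN; congr fine.
under eq_integral do rewrite EFinN.
by apply: integral_ge0N => y /g_ge0; rewrite lee_fin.
Qed.

Section JostPhase.
Context {R : realType}.
Local Notation mu := (@lebesgue_measure R).

Lemma Rintegral_itv_pinfty (f : R -> R) (a x : R) :
  (forall y, x < y -> f y = 0) ->
  \int[mu]_(y in `[a, x]) f y = \int[mu]_(y in `[a, +oo[) f y.
Proof.
move=> f0; rewrite Rintegral_mkcond [RHS]Rintegral_mkcond; congr Rintegral.
apply/funext => y; rewrite !patchE.
case: ifPn => [/set_mem|/negP Ncc]; case: ifPn => [/set_mem|/negP Ninf] //.
- rewrite /= in_itv /= => /andP[ay _]; case: Ninf; exact/mem_set/andP.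
- rewrite /= in_itv /= andbT => ay; rewrite f0 //; rewrite ltNge; apply/negP => yx.
  by case: Ncc; apply/mem_set; rewrite /= in_itv /= ay.
Qed.

Lemma bigO_eps_near (r r' : R -> R[i]) (eps : R -> R) :
  (\forall x \near +oo, r x = r' x) -> bigO_eps r eps -> bigO_eps r' eps.
Proof.
move=> [M [_ rr']] [C [X hC]]; exists C, (Num.max (M + 1) X) => x.
rewrite ge_max => /andP[Mx Xx]; rewrite -rr'; first exact: hC.
by apply: lt_le_trans Mx; rewrite ltrDl.
Qed.

Context {p q : R -> R} {lam s : R} {om : R -> R[i]}.
Hypotheses (p_gt0 : forall x, 0 <= x -> 0 < p x) (hs : s = 1 \/ s = -1).
Hypothesis hom : forall x, 0 <= x -> is_omega_bv p q lam s x (om x).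

Lemma Rintegral_Re_omega (x : R) :
  \int[mu]_(y in `[0, x]) complex.Re (om y) =
  \int[mu]_(y in `[0, x]) Num.sqrt (posp ((q y - lam) / p y)).
Proof.
apply: eq_Rintegral => y /set_mem; rewrite /= in_itv /= => /andP[y_ge0 _].
exact: (is_omega_bvE (p_gt0 y y_ge0) hs (hom y y_ge0)).1.
Qed.

Lemma Rintegral_Im_omega (x : R) :
  \int[mu]_(y in `[0, x]) complex.Im (om y) = - s * Phi p q lam x.
Proof.
transitivity (\int[mu]_(y in `[0, x]) (- s * Num.sqrt (posp ((lam - q y) / p y)))).
  apply: eq_Rintegral => y /set_mem; rewrite /= in_itv /= => /andP[y_ge0 _].
  exact: (is_omega_bvE (p_gt0 y y_ge0) hs (hom y y_ge0)).2.
rewrite /Phi; case: hs => ->; last first.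
  by under eq_Rintegral do rewrite opprK mul1r; rewrite opprK mul1r.
under eq_Rintegral do rewrite mulN1r.
by rewrite Rintegral_ge0N ?mulN1r // => y _; exact: sqrtr_ge0.
Qed.

Lemma jost_a_near :
  (\forall y \near +oo, q y < lam) ->
  \forall x \near +oo,
    jost_a om x = (Kfun p q lam)%:C * cexp (0 +i* (s * Phi p q lam x)).
Proof.
move=> [M [_ q_lt]]; exists (Num.max M 0); split; first exact: num_real.
move=> x; rewrite gt_max => /andP[Mx x_gt0].
have tail0 y : x < y -> Num.sqrt (posp ((q y - lam) / p y)) = 0.
  move=> xy; have y_ge0 : 0 <= y by rewrite ltW // (lt_trans x_gt0).
  rewrite posp_eq0 ?sqrtr0 // pmulr_lle0 ?invr_gt0 ?p_gt0 // subr_le0 ltW //.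
  by apply: q_lt; exact: lt_trans xy.
rewrite /jost_a Rintegral_Re_omega Rintegral_Im_omega (Rintegral_itv_pinfty _ 0 x tail0).
by rewrite cexpE /= mulNr opprK.
Qed.

End JostPhase.

Theorem corollary2p9 (R : realType) (p q dp dq : R -> R) (p0 x0 : R)
  (hA : assumptionA p q dp dq p0 x0)
  (lam : R) (hlam : 0 < lam) (s : R) (hs : s = 1 \/ s = -1)
  (om : R -> R[i]) (hom : forall x, 0 <= x -> is_omega_bv p q lam s x (om x))
  (th : R -> R[i]) (hth : modified_jost p q dp dq lam s om th) :
  exists r : R -> R[i],
    (forall x, 0 <= x ->
       th x = (Kfun p q lam)%:C * cexp (0 +i* (s * Phi p q lam x)) * (1 + r x)) /\
    bigO_eps r (eps_fun dp dq).
Proof.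
case: hA => [[p_gt0 _ _] [_ [_ _ _ _ q_cvg0]]].
case: hth => _ [r0 [thE r0_bigO]].
pose D x := (Kfun p q lam)%:C * cexp (0 +i* (s * Phi p q lam x)).
have D_neq0 x : D x != 0.
  by rewrite mulf_neq0 ?cexp_neq0 // eq_complex /= negb_and gt_eqF ?expR_gt0.
exists (fun x => th x / D x - 1); split.
  by move=> x _; rewrite addrC subrK mulrC divfK.
apply: bigO_eps_near r0_bigO.
have q_lt : \forall y \near +oo, q y < lam by exact: cvgr_lt q_cvg0 _ hlam.
have a_eq := jost_a_near p_gt0 hs hom q_lt.
near=> x; rewrite thE; last by near: x; exact: nbhs_pinfty_ge.
by rewrite -/(D x) (near a_eq x) // mulrC mulKf // addrC addKr.
Unshelve. all: by end_near.
Qed.
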